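(* Let $\mathcal{M}\subseteq 2^N$ be a matroid on $N=[n]$. Let the elements have distinct nonnegative weights with $w(\{1\})>\dots>w(\{n\})$. Let $k$ satisfy the standing assumptions below, let $p\in[\varepsilon(k),1/2]$, and let $r$ be a positive integer with $r\ge(1+\varepsilon(pk))pk$. Let $X_1,\dots,X_n\sim\mathrm{Ber}(2p)$ and $Y_1,\dots,Y_n\sim\mathrm{Ber}(1/2)$ be mutually independent. Set $S=\{i:X_i=1,Y_i=1\}$ and $T=\{i:X_i=1,Y_i=0\}$. Let $T^*\subseteq T$ be the set of elements of $T$ that improve $S$ with respect to $\mathcal{M}^r$, and let $S^*=\mathrm{OPT}(S,\mathcal{M}^r)$. Then $\mathbb{E}[w(T^* )]=\mathbb{E}[w(S^* )]$.
   Context: Matroids are identified with their families of independent sets. $\mathcal{M}^r$ is the $r$-fold union of $\mathcal{M}$: the family of sets partitionable into $r$ members of $\mathcal{M}$. $w(S)=\sum_{i\in S}w(\{i\})$. $\mathrm{OPT}(S,\mathcal{M}')=\arg\max_{U\subseteq S,\,U\in\mathcal{M}'}w(U)$, which is unique since weights are distinct. An element $i$ improves $S$ with respect to $\mathcal{M}'$ if $i\in\mathrm{OPT}(S\cup\{i\},\mathcal{M}')$. Standing assumptions: $\varepsilon(x)=C\sqrt{\log(n)/x}$, where $C$ is a sufficiently large absolute constant (e.g. $C\in[10,20]$, such that $\log(1/\varepsilon(k))-2$ is a positive integer), and $160^2\log n\le k\le n$. *)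

From HB Require Import structures.
From mathcomp Require Import all_boot all_order all_algebra.
From mathcomp Require Import reals exp.
Set Implicit Arguments. Unset Strict Implicit. Unset Printing Implicit Defensive.
Import Order.TTheory GRing.Theory Num.Theory.
Local Open Scope ring_scope.

(* Ground set N = [n] is represented by 'I_n; element i+1 of the paper is i. *)

Definition is_matroid (n : nat) (M : {set {set 'I_n}}) : Prop :=
  [/\ set0 \in M,
      (forall A B : {set 'I_n}, B \in M -> A \subset B -> A \in M) &
      (forall A B : {set 'I_n}, A \in M -> B \in M -> #|A| < #|B| ->
         exists2 x, x \in B :\: A & x |: A \in M)]%N.

(* r-fold union M^r: sets partitionable into r members of M
   (parts may be empty, as the empty set is independent). *)
Definition matroid_union (n r : nat) (M : {set {set 'I_n}}) : {set {set 'I_n}} :=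
  [set A : {set 'I_n} | [exists f : {ffun 'I_n -> 'I_r},
                          [forall j : 'I_r, [set x in A | f x == j] \in M]]].

Definition wt (R : realType) (n : nat) (w : 'I_n -> R) (A : {set 'I_n}) : R :=
  \sum_(i in A) w i.

Definition is_opt (R : realType) (n : nat) (w : 'I_n -> R)
  (S : {set 'I_n}) (M' : {set {set 'I_n}}) (U : {set 'I_n}) : bool :=
  [&& U \subset S, U \in M' &
      [forall V : {set 'I_n}, ((V \subset S) && (V \in M')) ==> (wt w V <= wt w U)]].

Definition OPT (R : realType) (n : nat) (w : 'I_n -> R)
  (S : {set 'I_n}) (M' : {set {set 'I_n}}) : {set 'I_n} :=
  odflt set0 [pick U | is_opt w S M' U].

Definition improves (R : realType) (n : nat) (w : 'I_n -> R)
  (M' : {set {set 'I_n}}) (S : {set 'I_n}) (i : 'I_n) : bool :=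
  i \in OPT w (i |: S) M'.

Definition eps (R : realType) (C : R) (n : nat) (x : R) : R :=
  C * Num.sqrt (ln (n%:R) / x).

Definition ber (R : realType) (q : R) (b : bool) : R := if b then q else 1 - q.

(* Outcome space: for each i, the pair (X_i, Y_i).  Mutual independence of
   X_1..X_n ~ Ber(2p), Y_1..Y_n ~ Ber(1/2) = product probability mass. *)
Definition outcome (n : nat) := {ffun 'I_n -> bool * bool}.

Definition prob (R : realType) (n : nat) (p : R) (xy : outcome n) : R :=
  \prod_(i < n) (ber (2 * p) (xy i).1 * ber (2^-1) (xy i).2).

Definition Expect (R : realType) (n : nat) (p : R) (f : outcome n -> R) : R :=
  \sum_(xy : outcome n) prob p xy * f xy.

Definition Sset (n : nat) (xy : outcome n) : {set 'I_n} :=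
  [set i | (xy i).1 && (xy i).2].
Definition Tset (n : nat) (xy : outcome n) : {set 'I_n} :=
  [set i | (xy i).1 && ~~ (xy i).2].

(* Toggling [Y_j] is an involution of the outcome space preserving the
   product mass, since [Y_j ~ Ber(1/2)].  It maps the outcomes in which
   [j \in T*] exactly onto those in which [j \in S*]: when [j \in T], [j]
   improves [S] iff [j \in OPT(j |: S)], and [j |: S] is [S] with [Y_j]
   toggled; when [j \notin T] the image has [j \notin S].  Hence each [j] has
   the same probability of lying in [T*] as in [S*], and linearity of
   expectation concludes.  No property of the matroid, of the weights, or of
   the parameters [k], [p], [r] is used. *)

From HB Require Import structures.
From mathcomp Require Import all_boot all_order all_algebra.
From mathcomp Require Import reals exp.
From mathcomp Require Import lra.
Import Order.TTheory GRing.Theory Num.Theory.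
Local Open Scope ring_scope.

Section SymmetricCoin.

Variables (R : realType) (n : nat).
Implicit Types (p : R) (w : 'I_n -> R) (xy : outcome n) (j : 'I_n).

Lemma OPT_sub w (S : {set 'I_n}) (M' : {set {set 'I_n}}) :
  OPT w S M' \subset S.
Proof. by rewrite /OPT; case: pickP => [U /andP[] | _] //=; apply: sub0set. Qed.

Definition toggleY j xy : outcome n :=
  [ffun i => if i == j then ((xy i).1, ~~ (xy i).2) else xy i].

Lemma toggleYK j : involutive (toggleY j).
Proof.
move=> xy; apply/ffunP => i; rewrite !ffunE.
by case: eqVneq => //= _; rewrite negbK; case: (xy i).
Qed.

Lemma prob_toggleY p j xy : prob p (toggleY j xy) = prob p xy.
Proof.
apply: eq_bigr => i _; rewrite ffunE; case: eqVneq => //= _.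
by congr (_ * _); case: (xy i).2 => /=; lra.
Qed.

Lemma Expect_toggleY p j (f : outcome n -> R) :
  Expect p (fun xy => f (toggleY j xy)) = Expect p f.
Proof.
rewrite /Expect (reindex_inj (inv_inj (toggleYK j))) /=.
by apply: eq_bigr => xy _; rewrite prob_toggleY toggleYK.
Qed.

Lemma Expect_wt p w (A : outcome n -> {set 'I_n}) :
  Expect p (fun xy => wt w (A xy))
  = \sum_j w j * Expect p (fun xy => (j \in A xy)%:R).
Proof.
under [RHS]eq_bigr do rewrite /Expect mulr_sumr.
rewrite /Expect exchange_big /=; apply: eq_bigr => xy _.
rewrite /wt big_mkcond mulr_sumr; apply: eq_bigr => j _.
by case: (j \in A xy); rewrite ?mulr1 ?mulr0 // mulrC.
Qed.

Lemma Sset_toggleY j xy : j \in Sset xy -> j |: Sset (toggleY j xy) = Sset xy.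
Proof.
rewrite inE => Sj; apply/setP => i; rewrite !inE ffunE.
by case: eqVneq => [->|] //=; rewrite Sj.
Qed.

Lemma in_Tset_toggleY j xy : (j \in Tset (toggleY j xy)) = (j \in Sset xy).
Proof. by rewrite !inE ffunE eqxx /= negbK. Qed.

Lemma improves_toggleY w (M' : {set {set 'I_n}}) j xy :
  (j \in Tset (toggleY j xy)) && improves w M' (Sset (toggleY j xy)) j
  = (j \in OPT w (Sset xy) M').
Proof.
rewrite in_Tset_toggleY /improves.
have [Sj | nSj] := boolP (j \in Sset xy); first by rewrite Sset_toggleY.
by apply/esym/negbTE; apply: contra nSj; apply/subsetP/OPT_sub.
Qed.

End SymmetricCoin.

Arguments Expect_toggleY {R n} p j f.

Theorem lemma3 (R : realType) (n : nat) (M : {set {set 'I_n}})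
  (w : 'I_n -> R) (C : R) (k : nat) (p : R) (r : nat) :
  is_matroid M ->
  (forall i : 'I_n, 0 <= w i) ->
  (forall i j : 'I_n, (i < j)%N -> w j < w i) ->
  10 <= C <= 20 ->
  (exists m : nat, (0 < m)%N /\ ln ((eps C n k%:R)^-1) - 2 = m%:R) ->
  160 ^+ 2 * ln (n%:R : R) <= k%:R ->
  (k <= n)%N ->
  eps C n k%:R <= p <= 2^-1 ->
  (0 < r)%N ->
  (1 + eps C n (p * k%:R)) * (p * k%:R) <= r%:R ->
  Expect p (fun xy => wt w [set i in Tset xy | improves w (matroid_union r M) (Sset xy) i])
  = Expect p (fun xy => wt w (OPT w (Sset xy) (matroid_union r M))).
Proof.
move=> _ _ _ _ _ _ _ _ _ _.
rewrite !Expect_wt; apply: eq_bigr => j _; congr (_ * _).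
rewrite -(Expect_toggleY _ j); apply: eq_bigr => xy _.
by rewrite inE improves_toggleY.
Qed.
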